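(* Fix $\theta>1$ and an integer $k\ge1$. Then $$\lim_{N\to\infty}\frac{W(N,k)}{[N]_\theta!}=(\theta-1)\,\frac{\theta^k-1}{\theta^{k+1}}\sum_{i=k}^{\infty}\frac{1}{\theta^i-1},$$ where the series converges and the limit $L(k)$ is positive. Moreover, $L(k)\to0$ as $k\to\infty$, so $\max_{k\ge1}L(k)$ is attained at some finite $k$ that depends only on $\theta$.
   Context: Permutations of $\{1,\dots,N\}$ are written in one-line notation; $\mathfrak S_N$ is the set of all of them. An entry $\pi_j$ is a left-to-right maximum if $\pi_j>\pi_i$ for all $i<j$; $\mathrm{inv}(\pi)$ is the number of pairs $i<j$ with $\pi_i>\pi_j$. Definitions: - $[m]_\theta=1+\theta+\cdots+\theta^{m-1}$ and $[m]_\theta!=[1]_\theta\cdots[m]_\theta$; note $[N]_\theta!=\sum_{\pi\in\mathfrak S_N}\theta^{\mathrm{inv}(\pi)}$. - For $0\le k\le N-1$, $\pi\in\mathfrak S_N$ is $k$-winnable if the first index $j>k$ with $\pi_j$ a left-to-right maximum has $\pi_j=N$. - $W(N,k)=\sum_{k\text{-winnable }\pi}\theta^{\mathrm{inv}(\pi)}$. - $L(k)$ denotes the limit in the claim. $W(N,k)/[N]_\theta!$ is the winning probability, under the Mallows distribution (probability of $\pi$ proportional to $\theta^{\mathrm{inv}(\pi)}$), of the positional strategy that rejects the first $k$ candidates and accepts the next left-to-right maximum. *)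

From Stdlib Require Import Reals.
From mathcomp Require Import all_boot.
From mathcomp Require Import perm.

Set Implicit Arguments.
Unset Strict Implicit.
Unset Printing Implicit Defensive.

(* Permutations of {1,...,N} are modelled as s : {perm 'I_N}, i.e. permutations
   of {0,...,N-1}; position j (0-based) holds the value s j (0-based).
   Thus 1-based pi_(j+1) = s j + 1, and the maximal value N corresponds to N-1. *)

Definition ltrmax (N : nat) (s : {perm 'I_N}) (j : 'I_N) : bool :=
  [forall i : 'I_N, (i < j)%N ==> (s i < s j)%N].

Definition inv (N : nat) (s : {perm 'I_N}) : nat :=
  #|[set p : 'I_N * 'I_N | (p.1 < p.2)%N && (s p.2 < s p.1)%N]|.

(* k-winnable: the first 1-based index j > k (i.e. 0-based index j >= k) at which
   a left-to-right maximum occurs carries the value N (0-based: N-1). *)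
Definition winnable (N k : nat) (s : {perm 'I_N}) : bool :=
  [exists j : 'I_N,
     [&& (k <= j)%N, ltrmax s j, (val (s j) == N.-1)
       & [forall j' : 'I_N, ((k <= j')%N && (j' < j)%N) ==> ~~ ltrmax s j']]].

Definition W (N k : nat) (theta : R) : R :=
  \big[Rplus/R0]_(s | @winnable N k s) pow theta (inv s).

Definition qint (m : nat) (theta : R) : R :=
  \big[Rplus/R0]_(i < m) pow theta i.

Definition qfact (N : nat) (theta : R) : R :=
  \big[Rmult/R1]_(1 <= m < N.+1) qint m theta.

Definition winprob (N k : nat) (theta : R) : R :=
  Rdiv (W N k theta) (qfact N theta).

(* A permutation of length N+1 is built from a permutation s
   of length N by appending a value v at the last position (s's values >= v
   are shifted up); this is a bijection, it adds N - v inversions, keeps the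
   left-to-right maxima of s, and creates one at the end iff v is the maximum.
   Summing theta^inv along this decomposition gives
     - [N]_theta! = sum of theta^inv                   (Mahonian identity),
     - Z(N+1,k) = ([N+1]_theta - 1) Z(N,k),
     - W(N+1,k) = ([N+1]_theta - 1) W(N,k) + Z(N,k)     (k <= N),
   where Z(N,k) weighs the permutations without left-to-right maximum at a
   position > k.  Dividing by [N]_theta! = prod (theta^m - 1)/(theta - 1)
   both recurrences telescope to closed forms; for N = k + n + 1
     W/[N]! = theta^(n+1) (theta^k-1)/(theta^N-1) * (theta-1)/theta
              * sum_(i <= n) 1/(theta^(k+i)-1).
   The prefactor tends to (theta^k-1)/theta^k and the sum to the convergent
   tail series S_k (dominated by a geometric series), which gives L(k).  The
   same domination gives 0 <= L(k) <= theta^-k, hence L(k) -> 0, and a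
   sequence tending to 0 with L(1) > 0 attains its maximum over k >= 1. *)

From Pilot Require Import Defs.
From Stdlib Require Import Reals Lra Lia.
From mathcomp Require Import ssreflect.
From HB Require Import structures.
From mathcomp Require all_boot perm zify.

(* The MathComp notations are imported only inside this module, so that the
   final theorem below is read with the standard notations on nat. *)
Module Insertion.
Import all_boot perm zify.
Set Implicit Arguments.

(* Real
   arithmetic is written with Rplus/Rmult/Rminus in this module, as the
   infix notations are taken by nat here. *)
HB.instance Definition _ := Monoid.isComLaw.Build R R0 Rplus
  (fun a b c => esym (Rplus_assoc a b c)) Rplus_comm Rplus_0_l.
HB.instance Definition _ := Monoid.isComLaw.Build R R1 Rmult
  (fun a b c => esym (Rmult_assoc a b c)) Rmult_comm Rmult_1_l.
HB.instance Definition _ := Monoid.isMulLaw.Build R R0 Rmult Rmult_0_l Rmult_0_r.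
HB.instance Definition _ :=
  Monoid.isAddLaw.Build R Rmult Rplus Rmult_plus_distr_r Rmult_plus_distr_l.

Lemma big_ord_lift_max (T : Type) (idx : T) (op : Monoid.law idx) n (F : 'I_n.+1 -> T) :
  \big[op/idx]_(i < n.+1) F i = op (\big[op/idx]_(j < n) F (lift ord_max j)) (F ord_max).
Proof.
rewrite big_ord_recr; congr (op _ _); apply: eq_bigr => j _; congr F.
by apply: ord_inj; rewrite lift_max.
Qed.

Lemma forall_ord_lift_max n (P : 'I_n.+1 -> bool) :
  [forall i, P i] = P ord_max && [forall j : 'I_n, P (lift ord_max j)].
Proof.
apply/forallP/andP => [allP | [Pmax /forallP Plift] i]; first by split => //; apply/forallP.
by case: (unliftP ord_max i) => [j|] ->.
Qed.

Lemma exists_ord_lift_max n (P : 'I_n.+1 -> bool) :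
  [exists i, P i] = P ord_max || [exists j : 'I_n, P (lift ord_max j)].
Proof.
apply/existsP/orP => [[i] | [Pmax | /existsP [j Pj]]]; last 2 first.
- by exists ord_max.
- by exists (lift ord_max j).
by case: (unliftP ord_max i) => [j|] -> Pi; [right; apply/existsP; exists j | left].
Qed.

Lemma ltn_lift n (h : 'I_n.+1) (a b : 'I_n) : (lift h a < lift h b) = (a < b).
Proof. by rewrite !ltnNge leq_bump2. Qed.

Lemma card_pairs n (P : 'I_n -> 'I_n -> bool) :
  #|[set p : 'I_n * 'I_n | P p.1 p.2]| = \sum_(i < n) \sum_(j < n) P i j.
Proof.
rewrite -sum1_card pair_big /= big_mkcond /=; apply: eq_bigr => p _.
by rewrite inE; case: (P _ _).
Qed.

Lemma count_geq n m : \sum_(x < n) (m <= x) = n - m.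
Proof.
elim: n => [|n IHn]; first by rewrite big_ord0.
by rewrite big_ord_recr /= IHn; case: (leqP m n); lia.
Qed.

(* insert_last v s: the permutation of length n+1 whose last entry is v and
   whose first n entries are in the same relative order as s. *)
Definition insert_last n (v : 'I_n.+1) (s : 'S_n) : 'S_n.+1 := lift_perm ord_max v s.

(* (v, s) |-> insert_last v s is a bijection: it is injective between sets
   of the same size (n+1)!. *)
Lemma insert_last_bij n : bijective (fun p : 'I_n.+1 * 'S_n => insert_last p.1 p.2).
Proof.
apply: inj_card_bij; last by rewrite card_prod card_ord !card_Sn factS.
move=> [v s] [v' s'] /= eq_ins.
have eq_v : v = v'.
  by have := congr1 (fun t : 'S_n.+1 => t ord_max) eq_ins; rewrite /= !lift_perm_id.
congr pair => //; apply/permP => i; apply: (@lift_inj _ v).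
have := congr1 (fun t : 'S_n.+1 => t (lift ord_max i)) eq_ins.
by rewrite /= !lift_perm_lift eq_v.
Qed.

Lemma big_insert_last n (P : pred 'S_n.+1) (F : 'S_n.+1 -> R) :
  \big[Rplus/R0]_(t | P t) F t =
  \big[Rplus/R0]_(v : 'I_n.+1) \big[Rplus/R0]_(s | P (insert_last v s)) F (insert_last v s).
Proof. by rewrite pair_big_dep (reindex _ (onW_bij _ (insert_last_bij n))). Qed.

Definition ltrmax_free N (k m : nat) (s : 'S_N) : bool :=
  [forall j : 'I_N, (k <= j < m) ==> ~~ ltrmax s j].

Lemma winnableE N k (s : 'S_N) :
  winnable k s =
  [exists j : 'I_N, [&& k <= j, ltrmax s j, val (s j) == N.-1 & ltrmax_free k j s]].
Proof. by []. Qed.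

Lemma ltrmax_free_all N k m (s : 'S_N) : N <= m -> ltrmax_free k m s = ltrmax_free k N s.
Proof.
by move=> N_le_m; apply: eq_forallb => j; rewrite ltn_ord (leq_trans (ltn_ord j) N_le_m).
Qed.

Section InsertLast.
Variables (N : nat) (v : 'I_N.+1) (s : 'S_N).
Local Notation t := (insert_last v s).

Lemma insert_last_max : t ord_max = v.
Proof. exact: lift_perm_id. Qed.

Lemma insert_last_lift (j : 'I_N) : t (lift ord_max j) = lift v (s j).
Proof. exact: lift_perm_lift. Qed.

(* The new inversions are the pairs (i, last) with t i > v; there are N - v. *)
Lemma inv_insert_last : Defs.inv t = Defs.inv s + (N - v).
Proof.
rewrite /Defs.inv (card_pairs (fun i j => (i < j) && (t j < t i))).
rewrite (card_pairs (fun i j => (i < j) && (s j < s i))) big_ord_lift_max.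
rewrite [X in _ + X = _]big1 ?addn0; last by move=> j _; rewrite ltnNge leq_ord.
have -> : N - v = \sum_(i < N) (v <= s i) by rewrite -count_geq (reindex_inj (@perm_inj _ s)).
rewrite -big_split; apply: eq_bigr => i _; rewrite big_ord_lift_max; congr addn.
  by apply: eq_bigr => j _; rewrite !insert_last_lift !lift_max ltn_lift.
rewrite lift_max ltn_ord /= insert_last_max insert_last_lift /= /bump.
by case: (leqP v (s i)) => h; rewrite /= ?addn1 ?addn0 ?ltnS ?h // ltnNge (ltnW h).
Qed.

Lemma ltrmax_insert_last_lift (j : 'I_N) : ltrmax t (lift ord_max j) = ltrmax s j.
Proof.
have maxF : (@ord_max N < j) = false by rewrite ltnNge /= (ltnW (ltn_ord j)).
rewrite /ltrmax forall_ord_lift_max lift_max maxF implyFb andTb.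
by apply: eq_forallb => i; rewrite !lift_max !insert_last_lift ltn_lift.
Qed.

Lemma ltrmax_insert_last_max : ltrmax t ord_max = (v == ord_max).
Proof.
rewrite /ltrmax forall_ord_lift_max ltnn implyFb andTb insert_last_max.
have -> : [forall j : 'I_N, (lift ord_max j < @ord_max N) ==> (t (lift ord_max j) < v)]
          = [forall j, s j < v].
  apply: eq_forallb => j; rewrite lift_max ltn_ord implyTb insert_last_lift /= /bump.
  by case: (leqP v (s j)) => h; rewrite ?addn1 ?addn0 // ltnNge ltnW.
apply/forallP/eqP => [all_lt | ->]; last by move=> j; rewrite ltn_ord.
apply/val_inj/eqP; rewrite /= eqn_leq leq_ord leqNgt; apply/negP => v_lt_N.
by have := all_lt (s^-1 (Ordinal v_lt_N))%g; rewrite permKV ltnn.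
Qed.

Lemma ltrmax_free_insert_last k m :
  ltrmax_free k m t = ((k <= N < m) ==> (v != ord_max)) && ltrmax_free k m s.
Proof.
rewrite /ltrmax_free forall_ord_lift_max ltrmax_insert_last_max; congr andb.
by apply: eq_forallb => j; rewrite lift_max ltrmax_insert_last_lift.
Qed.

Lemma insert_last_lift_is_top (j : 'I_N) :
  (val (t (lift ord_max j)) == N) = (val (s j) == N.-1) && (v != ord_max).
Proof.
have v_max : (v == ord_max) = (N <= v) by rewrite -val_eqE /= eqn_leq leq_ord.
rewrite insert_last_lift v_max -ltnNge /= /bump.
move: (ltn_ord (s j)) (ltn_ord v) => sj_lt v_lt.
by case: (leqP v (s j)) => h1; apply/idP/idP; lia.
Qed.

Lemma winnable_insert_last k :
  winnable k t = if v == ord_max then (k <= N) && ltrmax_free k N s else winnable k s.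
Proof.
rewrite [LHS]winnableE exists_ord_lift_max insert_last_max ltrmax_insert_last_max.
rewrite ltrmax_free_insert_last ltnn andbF implyFb andTb.
under eq_existsb => j do
  rewrite lift_max ltrmax_insert_last_lift insert_last_lift_is_top ltrmax_free_insert_last
          ltnNge (ltnW (ltn_ord j)) andbF implyFb andTb.
case: (eqVneq v ord_max) => [-> | v_not_max] /=.
- rewrite eqxx; case: existsP => [[j] | _ /=]; last by rewrite orbF.
  by rewrite andbF andFb !andbF.
- by rewrite andbF /=; apply: eq_existsb => j; rewrite andbT.
Qed.
End InsertLast.

Section Weights.
Variable theta : R.

Definition free_weight N k : R :=
  \big[Rplus/R0]_(s : 'S_N | ltrmax_free k N s) pow theta (Defs.inv s).

Lemma weight_insert_last N (P : pred 'S_N.+1) :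
  \big[Rplus/R0]_(t | P t) pow theta (Defs.inv t) =
  \big[Rplus/R0]_(v : 'I_N.+1)
    Rmult (\big[Rplus/R0]_(s | P (insert_last v s)) pow theta (Defs.inv s)) (pow theta (N - v)).
Proof.
rewrite big_insert_last; apply: eq_bigr => v _; rewrite big_distrl.
by apply: eq_bigr => s _; rewrite inv_insert_last pow_add.
Qed.

Lemma sum_pow_rev N : \big[Rplus/R0]_(v : 'I_N.+1) pow theta (N - v) = qint N.+1 theta.
Proof.
rewrite /qint (reindex_inj rev_ord_inj); apply: eq_bigr => v _; congr pow.
by rewrite /= subKn // -ltnS.
Qed.

Lemma sum_pow_rev_lift N :
  \big[Rplus/R0]_(j : 'I_N) pow theta (N - lift ord_max j) = Rminus (qint N.+1 theta) R1.
Proof. by rewrite -sum_pow_rev big_ord_lift_max subnn /=; ring. Qed.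

Lemma qfact_0 : qfact 0 theta = R1.
Proof. by rewrite /qfact big_geq. Qed.

Lemma qfact_step N : qfact N.+1 theta = Rmult (qfact N theta) (qint N.+1 theta).
Proof. by rewrite /qfact big_nat_recr. Qed.

Lemma qint_closed m : Rmult (Rminus theta R1) (qint m theta) = Rminus (pow theta m) R1.
Proof.
elim: m => [|m IHm]; first by rewrite /qint big_ord0 /=; ring.
by rewrite /qint big_ord_recr /= -/(qint m theta) Rmult_plus_distr_l IHm; ring.
Qed.

Lemma qfact_inv_sum N : \big[Rplus/R0]_(s : 'S_N) pow theta (Defs.inv s) = qfact N theta.
Proof.
elim: N => [|N IHN].
  rewrite /qfact big_geq // (big_pred1 (1%g : 'S_0)) => [|s]; last by apply/esym/eqP/permP => -[].
  by rewrite /Defs.inv eq_card0 // => -[[]].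
rewrite weight_insert_last qfact_step -IHN -sum_pow_rev big_distrr /=.
by apply: eq_bigr.
Qed.

Lemma free_weight_base k : free_weight k k = qfact k theta.
Proof.
rewrite -qfact_inv_sum; apply: eq_bigl => s; apply/forallP => j.
by rewrite ltn_ord andbT leqNgt ltn_ord.
Qed.

Lemma W_base k : W k k theta = R0.
Proof.
rewrite /W big_pred0 // => s; apply/existsP => -[j /and4P [k_le_j _ _ _]].
by move: (ltn_ord j); rewrite ltnNge k_le_j.
Qed.

(* Z(N+1,k) = ([N+1]_theta - 1) Z(N,k): the appended value must not be the top. *)
Lemma free_weight_step N k : (k <= N)%coq_nat ->
  free_weight N.+1 k = Rmult (Rminus (qint N.+1 theta) R1) (free_weight N k).
Proof.
move=> /leP k_le_N; rewrite /free_weight weight_insert_last big_ord_lift_max.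
rewrite [X in _ (Rmult X _) = _]big_pred0 => [|s]; last first.
  by rewrite ltrmax_free_insert_last k_le_N ltnSn eqxx.
rewrite Rmult_0_l Monoid.mulm1 -sum_pow_rev_lift big_distrl.
apply: eq_bigr => j _; rewrite Rmult_comm; congr Rmult; apply: eq_bigl => s.
by rewrite ltrmax_free_insert_last eq_sym (neq_lift _ _) implybT ltrmax_free_all.
Qed.

(* W(N+1,k) = ([N+1]_theta - 1) W(N,k) + Z(N,k): either the top value is
   appended (won iff no record in between) or the game is decided before. *)
Lemma W_step N k : (k <= N)%coq_nat ->
  W N.+1 k theta =
  Rplus (Rmult (Rminus (qint N.+1 theta) R1) (W N k theta)) (free_weight N k).
Proof.
move=> /leP k_le_N; rewrite /W weight_insert_last big_ord_lift_max subnn Rmult_1_r.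
congr (_ _ _); last by apply: eq_bigl => s; rewrite winnable_insert_last eqxx k_le_N.
rewrite -sum_pow_rev_lift big_distrl.
apply: eq_bigr => j _; rewrite Rmult_comm; congr Rmult; apply: eq_bigl => s.
by rewrite winnable_insert_last eq_sym (negbTE (neq_lift _ _)).
Qed.
End Weights.
End Insertion.

Open Scope R_scope.

Lemma cv_const c : Un_cv (fun _ => c) c.
Proof. by move=> eps eps_pos; exists 0%nat => n _; rewrite /Rdist Rminus_diag Rabs_R0. Qed.

Lemma geometric_cv0 x : 0 <= x < 1 -> Un_cv (pow x) 0.
Proof.
move=> [x_ge0 x_lt1] eps eps_pos.
have [N HN] := pow_lt_1_zero x ltac:(rewrite Rabs_right; lra) eps eps_pos.
by exists N => n n_ge; rewrite /Rdist Rminus_0_r; apply: HN.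
Qed.

Lemma cv_squeeze0 (u v : nat -> R) :
  (forall n, 0 <= u n <= v n) -> Un_cv v 0 -> Un_cv u 0.
Proof.
move=> uv v_cv eps eps_pos; have [N HN] := v_cv eps eps_pos.
exists N => n n_ge; have [u_ge0 u_le_v] := uv n.
rewrite /Rdist Rminus_0_r Rabs_right; last lra.
apply: Rle_lt_trans (HN n n_ge); rewrite /Rdist Rminus_0_r.
by apply: Rle_trans (Rle_abs _).
Qed.

Lemma finite_argmax (u : nat -> R) M :
  exists k0, (1 <= k0 <= S M)%nat /\ forall k, (1 <= k <= S M)%nat -> u k <= u k0.
Proof.
elim: M => [|M [k0 [k0_range k0_max]]].
  by exists 1%nat; split => [|k k_range]; [lia | rewrite (_ : k = 1%nat); [lra | lia]].
case: (Rle_dec (u (S (S M))) (u k0)) => [u_le | u_gt].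
- exists k0; split => [|k k_range]; first lia.
  by case: (Nat.eq_dec k (S (S M))) => [-> | k_ne] //; apply: k0_max; lia.
- exists (S (S M)); split => [|k k_range]; first lia.
  case: (Nat.eq_dec k (S (S M))) => [-> | k_ne]; first lra.
  by apply: (Rle_trans _ (u k0)); [apply: k0_max; lia | lra].
Qed.

(* A null sequence with u 1 > 0 attains its maximum over k >= 1: beyond the
   rank where |u k| < u 1 it is below u 1, so a finite maximum suffices. *)
Lemma argmax_of_cv0 (u : nat -> R) :
  Un_cv u 0 -> 0 < u 1%nat ->
  exists k0, (1 <= k0)%nat /\ forall k, (1 <= k)%nat -> u k <= u k0.
Proof.
move=> u_cv0 u1_pos; have [N small] := u_cv0 _ u1_pos.
have [k0 [k0_range k0_max]] := finite_argmax u N.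
exists k0; split => [|k k_ge1]; first lia.
case: (Nat.le_gt_cases k (S N)) => [k_le | k_gt]; first by apply: k0_max; lia.
have := small k ltac:(lia); have := k0_max 1%nat ltac:(lia).
rewrite /Rdist Rminus_0_r => u1_le /Rabs_def2 [? _]; lra.
Qed.

Section Asymptotics.
Variable theta : R.
Hypothesis theta_gt1 : 1 < theta.

Lemma pow_gt1 {m : nat} : (0 < m)%nat -> 1 < theta ^ m.
Proof. by move=> m_pos; apply: Rlt_pow_R1. Qed.

Lemma qint_eq m : qint m theta = (theta ^ m - 1) / (theta - 1).
Proof.
apply: (Rmult_eq_reg_l (theta - 1)); last lra.
rewrite Insertion.qint_closed; field; lra.
Qed.

Lemma qfact_pos N : 0 < qfact N theta.
Proof.
elim: N => [|N IHN]; first by rewrite Insertion.qfact_0; lra.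
rewrite Insertion.qfact_step qint_eq; apply: Rmult_lt_0_compat => //.
have := pow_gt1 (Nat.lt_0_succ N) => ?; apply: Rdiv_lt_0_compat; lra.
Qed.

(* Z(k+n,k)/[k+n]_theta!, the probability under Mallows that no
   left-to-right maximum occurs after position k, in closed form. *)
Definition free_prob (k n : nat) : R :=
  theta ^ n * (theta ^ k - 1) / (theta ^ (k + n) - 1).

Lemma free_weight_closed k n : (0 < k)%nat ->
  Insertion.free_weight theta (k + n) k = free_prob k n * qfact (k + n) theta.
Proof.
move=> k_pos; have Hk := pow_gt1 k_pos.
elim: n => [|n IHn].
  rewrite Nat.add_0_r Insertion.free_weight_base /free_prob Nat.add_0_r /=; field; lra.
have Hkn : 1 < theta ^ (k + n) by apply: pow_gt1; lia.
rewrite Nat.add_succ_r Insertion.free_weight_step; last by lia.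
rewrite Insertion.qfact_step IHn qint_eq /free_prob Nat.add_succ_r /=.
field; repeat split; nra.
Qed.

Definition tail_term (k i : nat) : R := / (theta ^ (k + i) - 1).

Lemma winprob_step k n a : (0 < k)%nat ->
  winprob (k + n) k theta = free_prob k n * ((theta - 1) / theta) * a ->
  winprob (k + S n) k theta =
  free_prob k (S n) * ((theta - 1) / theta) * (a + tail_term k n).
Proof.
rewrite /winprob => k_pos Hw.
have Hk := pow_gt1 k_pos.
have Hkn : 1 < theta ^ (k + n) by apply: pow_gt1; lia.
have HF := qfact_pos (k + n).
rewrite Nat.add_succ_r Insertion.W_step; last by lia.
have -> : W (k + n) k theta = free_prob k n * ((theta - 1) / theta) * a * qfact (k + n) theta.
  by rewrite -Hw; field; lra.
rewrite Insertion.qfact_step free_weight_closed // qint_eq /free_prob /tail_term.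
rewrite Nat.add_succ_r /=; field; repeat split; nra.
Qed.

Lemma winprob_closed k n : (0 < k)%nat ->
  winprob (k + S n) k theta =
  free_prob k (S n) * ((theta - 1) / theta) * sum_f_R0 (tail_term k) n.
Proof.
move=> k_pos.
have base : winprob (k + 0) k theta = free_prob k 0 * ((theta - 1) / theta) * 0.
  by rewrite /winprob Nat.add_0_r Insertion.W_base; field; have := qfact_pos k; lra.
elim: n => [|n IHn]; first by rewrite (winprob_step _ _ _ k_pos base) Rplus_0_l.
by rewrite (winprob_step _ _ _ k_pos IHn).
Qed.

Let q := / theta.

Lemma q_bounds : 0 <= q < 1.
Proof.
rewrite /q; split; first by left; apply: Rinv_0_lt_compat; lra.
by rewrite -Rinv_1; apply: Rinv_lt_contravar; lra.
Qed.

Definition majorant (k i : nat) : R := / (theta ^ k - 1) * q ^ i.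

Lemma tail_term_bounds k i : (0 < k)%nat -> 0 < tail_term k i <= majorant k i.
Proof.
move=> k_pos; have Hk := pow_gt1 k_pos.
have Hi : 1 <= theta ^ i by apply: pow_R1_Rle; lra.
rewrite /tail_term /majorant /q pow_add pow_inv -Rinv_mult.
split; first by apply: Rinv_0_lt_compat; nra.
apply: Rinv_le_contravar; nra.
Qed.

Lemma majorant_series_cv k :
  Un_cv (sum_f_R0 (majorant k)) (/ (theta ^ k - 1) * / (1 - q)).
Proof.
apply: (Un_cv_ext (fun n => / (theta ^ k - 1) * sum_f_R0 (fun i => 1 * q ^ i) n)).
  by move=> n; rewrite scal_sum; apply: sum_eq => i _; rewrite /majorant; ring.
apply: CV_mult; first exact: cv_const.
have [q_ge0 q_lt1] := q_bounds; apply: GP_infinite; rewrite Rabs_right; lra.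
Qed.

Lemma tail_series_cv k : (0 < k)%nat -> {S | Un_cv (sum_f_R0 (tail_term k)) S}.
Proof.
move=> k_pos; apply: (Rseries_CV_comp _ (majorant k)).
  by move=> i; have := tail_term_bounds k i k_pos; lra.
by exists (/ (theta ^ k - 1) * / (1 - q)); exact: majorant_series_cv.
Qed.

(* S_k = sum_(i >= 0) 1/(theta^(k+i) - 1) for k >= 1 (and 0 for k = 0). *)
Definition tail_sum (k : nat) : R :=
  match k with
  | O => 0
  | S k' => proj1_sig (tail_series_cv (S k') (Nat.lt_0_succ k'))
  end.

Lemma tail_sum_cv k : (0 < k)%nat -> Un_cv (sum_f_R0 (tail_term k)) (tail_sum k).
Proof. by case: k => [/Nat.lt_irrefl [] | k' _]; exact: proj2_sig. Qed.

Lemma tail_sum_bounds k : (0 < k)%nat ->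
  0 < tail_sum k <= / (theta ^ k - 1) * / (1 - q).
Proof.
move=> k_pos; have Hcv := tail_sum_cv k k_pos; split.
- apply: (Rlt_le_trans _ (sum_f_R0 (tail_term k) 0)).
    exact: (proj1 (tail_term_bounds k 0 k_pos)).
  apply: (growing_ineq _ _ _ Hcv) => n /=; have := tail_term_bounds k (S n) k_pos; lra.
- move: Hcv (majorant_series_cv k); apply: Rle_cv_lim => n.
  by apply: sum_Rle => i _; case: (tail_term_bounds k i k_pos).
Qed.

Definition L (k : nat) : R := (theta - 1) * ((theta ^ k - 1) / theta ^ (k + 1)) * tail_sum k.

Lemma L_pos k : (0 < k)%nat -> 0 < L k.
Proof.
move=> k_pos; have Hk := pow_gt1 k_pos; have [S_pos _] := tail_sum_bounds k k_pos.
apply: Rmult_lt_0_compat => //; apply: Rmult_lt_0_compat; first lra.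
by apply: Rdiv_lt_0_compat; [lra | apply: pow_lt; lra].
Qed.

(* 0 <= L(k) <= theta^-k, from the geometric bound on S_k. *)
Lemma L_bounds k : 0 <= L k <= q ^ k.
Proof.
case: k => [|k]; first by rewrite /L /=; split; lra.
have k_pos := Nat.lt_0_succ k; have Hk := pow_gt1 k_pos.
have [S_pos S_le] := tail_sum_bounds _ k_pos.
have c_pos : 0 < (theta - 1) * ((theta ^ S k - 1) / theta ^ (S k + 1)).
  by apply: Rmult_lt_0_compat; [lra | apply: Rdiv_lt_0_compat; [lra | apply: pow_lt; lra]].
split; first by left; apply: Rmult_lt_0_compat.
apply: (Rle_trans _ _ _ (Rmult_le_compat_l _ _ _ (Rlt_le _ _ c_pos) S_le)).
rewrite /q pow_add pow_inv; right; field; repeat split; lra.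
Qed.

Lemma L_cv0 : Un_cv L 0.
Proof. exact: (cv_squeeze0 _ _ L_bounds (geometric_cv0 _ q_bounds)). Qed.

(* free_prob k (n+1) = (theta^k-1)/theta^k * (1 + tail_term k (n+1)), and the
   tail terms tend to 0. *)
Lemma free_prob_limit k : (0 < k)%nat ->
  Un_cv (fun n => free_prob k (S n)) ((theta ^ k - 1) / theta ^ k).
Proof.
move=> k_pos; have Hk := pow_gt1 k_pos.
have tail_term_cv0 : Un_cv (fun n => tail_term k (S n)) 0.
  apply: (cv_squeeze0 _ (fun n => / (theta ^ k - 1) * q * q ^ n)).
    by move=> n; have := tail_term_bounds k (S n) k_pos; rewrite /majorant /=; lra.
  rewrite -(Rmult_0_r (/ (theta ^ k - 1) * q)).
  by apply: CV_mult; [exact: cv_const | exact: geometric_cv0 q_bounds].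
rewrite -[X in Un_cv _ X](Rmult_1_r) -[X in _ * X](Rplus_0_r).
apply: (Un_cv_ext (fun n => (theta ^ k - 1) / theta ^ k * (1 + tail_term k (S n)))).
  move=> n; have Hkn : 1 < theta ^ (k + S n) by apply: pow_gt1; lia.
  rewrite /free_prob /tail_term pow_add in Hkn *; field; split; nra.
by apply: CV_mult; [exact: cv_const | apply: CV_plus; [exact: cv_const | exact: tail_term_cv0]].
Qed.

Lemma winprob_cv k : (0 < k)%nat -> Un_cv (fun N => winprob N k theta) (L k).
Proof.
move=> k_pos; have Hk := pow_gt1 k_pos.
apply: (CV_shift _ (S k)).
apply: (Un_cv_ext
  (fun n => free_prob k (S n) * ((theta - 1) / theta) * sum_f_R0 (tail_term k) n)).
  by move=> n; rewrite -winprob_closed // Nat.add_comm Nat.add_succ_r.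
have -> : L k = (theta ^ k - 1) / theta ^ k * ((theta - 1) / theta) * tail_sum k.
  by rewrite /L pow_add /=; field; lra.
apply: CV_mult; last exact: tail_sum_cv.
by apply: CV_mult; [exact: free_prob_limit | exact: cv_const].
Qed.

End Asymptotics.

Theorem corollary6p6 (theta : R) (Htheta : 1 < theta) :
  exists L : nat -> R,
    (forall k : nat, (1 <= k)%nat ->
       (exists S : R,
          infinite_sum (fun i : nat => / (theta ^ (k + i) - 1)) S /\
          L k = (theta - 1) * ((theta ^ k - 1) / theta ^ (k + 1)) * S) /\
       Un_cv (fun N : nat => winprob N k theta) (L k) /\
       0 < L k) /\
    Un_cv L 0 /\
    (exists k0 : nat, (1 <= k0)%nat /\
       forall k : nat, (1 <= k)%nat -> L k <= L k0).
Proof.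
exists (L theta Htheta); split; [|split].
- move=> k k_pos; split; [|split].
  + by exists (tail_sum theta Htheta k); split; [exact: tail_sum_cv | reflexivity].
  + exact: winprob_cv.
  + exact: L_pos.
- exact: L_cv0.
- by apply: argmax_of_cv0; [exact: L_cv0 | exact: L_pos].
Qed.
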